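(* Let $q$ be an odd prime power, $f$ a normal planar function on $\mathbb F_{q^2}$, and $\theta\in\mathbb F_{q^2}^*$ such that for every $c\in\mathbb F_q$, $\#\{x\in\mathbb F_{q^2}:\theta_1f_0(x)-\theta_0f_1(x)=c\}$ equals $q+1$ if $c\neq0$ and $1$ if $c=0$, so that $\mathcal U_\theta:=\{(x,t\theta):x\in\mathbb F_{q^2},t\in\mathbb F_q\}\cup\{(\infty)\}$ is a unital in $\Pi(f)$. Then in $\mathcal U_\theta$ the point $(\infty)$ is a vertex of Wilbrink's condition II in strong form.
   Context: A function $f:\mathbb F_{q^2}\to\mathbb F_{q^2}$ is planar if for every $a\neq0$ the map $x\mapsto f(x+a)-f(x)$ is a bijection; it is normal if moreover $f(0)=0$ and $f(a)=f(b)$ iff $a=\pm b$. For planar $f$, $\Pi(f)$ is the projective plane with points $(x,y)\in\mathbb F_{q^2}^2$ and $(a)$ for $a\in\mathbb F_{q^2}\cup\{\infty\}$, lines $L_{a,b}=\{(x,f(x+a)-b):x\in\mathbb F_{q^2}\}\cup\{(a)\}$, $N_a=\{(a,y):y\in\mathbb F_{q^2}\}\cup\{(\infty)\}$ ($a,b\in\mathbb F_{q^2}$), $L_\infty=\{(a):a\in\mathbb F_{q^2}\cup\{\infty\}\}$. A fixed $\xi\in\mathbb F_{q^2}\setminus\mathbb F_q$ is chosen; $\theta=\theta_0+\theta_1\xi$, $f(x)=f_0(x)+f_1(x)\xi$ with components in $\mathbb F_q$. A unital (set of $q^3+1$ points meeting every line in $1$ or $q+1$ points) is regarded as a design whose blocks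 are its intersections with lines meeting it in $q+1$ points. A point $v$ of the unital is a vertex of Wilbrink's condition II in strong form if for every block $B$ with $v\notin B$, every block $C$ with $v\in C$ meeting $B$, and every point $w\in C$ distinct from $v$ and from the point of $B\cap C$, there exists a block $B'\neq C$ with $w\in B'$ such that $B'$ meets every block that contains $v$ and meets $B$. *)

From mathcomp Require Import all_boot all_order all_algebra all_field.
Set Implicit Arguments. Unset Strict Implicit. Unset Printing Implicit Defensive.
Import GRing.Theory.
Local Open Scope ring_scope.

Section PlaneDefs.
Variable K : finFieldType.   (* plays the role of F_{q^2} *)
Variable q : nat.

(* F_q inside F_{q^2}: the elements fixed by x |-> x^q *)
Definition inFq (x : K) : bool := x ^+ q == x.

(* components w.r.t. the basis 1, xi over F_q: y = comp0 y + comp1 y * xi,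
   written out explicitly using the Frobenius y |-> y^q (requires xi^q != xi) *)
Definition comp1 (xi y : K) : K := (y - y ^+ q) / (xi - xi ^+ q).
Definition comp0 (xi y : K) : K := y - comp1 xi y * xi.

Definition planar (f : K -> K) : Prop :=
  forall a : K, a != 0 -> bijective (fun x => f (x + a) - f x).

Definition normal_planar (f : K -> K) : Prop :=
  planar f /\ f 0 = 0 /\ (forall a b : K, f a = f b <-> (a = b \/ a = - b)).

(* points of Pi(f): inl (x,y) is the affine point (x,y);
   inr (Some a) is the point (a), inr None is the point (infinity) *)
Definition point := ((K * K) + option K)%type.
(* lines: inl (a,b) is L_{a,b}; inr (inl a) is N_a; inr (inr tt) is L_infinity *)
Definition line := ((K * K) + (K + unit))%type.

Definition line_pts (f : K -> K) (l : line) : {set point} :=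
  match l with
  | inl (a, b) => [set p : point | match p with
                                   | inl (x, y) => y == f (x + a) - b
                                   | inr o => o == Some a end]
  | inr (inl a) => [set p : point | match p with
                                    | inl (x, _) => x == a
                                    | inr o => o == None end]
  | inr (inr _) => [set p : point | if p is inr _ then true else false]
  end.

Definition unitalU (theta : K) : {set point} :=
  [set p : point | match p with
                   | inl (_, y) => [exists t : K, inFq t && (y == t * theta)]
                   | inr o => o == None end].

Definition is_block (f : K -> K) (U : {set point}) (B : {set point}) : bool :=
  [exists l : line, (B == U :&: line_pts f l) && (#|U :&: line_pts f l| == q.+1)].

Definition strong_WII_vertex (f : K -> K) (U : {set point}) (v : point) : Prop :=
  v \in U /\
  forall B C : {set point},
    is_block f U B -> v \notin B ->
    is_block f U C -> v \in C -> B :&: C != set0 ->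
    forall w : point, w \in C -> w != v -> w \notin B :&: C ->
    exists B' : {set point},
      [/\ is_block f U B', B' != C, w \in B' &
          forall D : {set point}, is_block f U D -> v \in D -> D :&: B != set0 ->
            B' :&: D != set0].

End PlaneDefs.

(** The vertical translations (x, y) |-> (x, y + r theta) with r in F_q fix (infinity),
    preserve U_theta, fix each line N_d and map L_{a,b} to L_{a,b - r theta}, so they
    permute the blocks.  If C through (infinity) meets B in z and w lies on C, the
    translate of B carrying z to w is the block B': a block D through (infinity) meeting
    B in a point meets B' in the translate of that point. *)

From mathcomp Require Import all_boot all_order all_algebra all_field.
Import GRing.Theory.
Local Open Scope ring_scope.

Section VerticalTranslation.

Variables (K : finFieldType) (q : nat) (f : K -> K) (theta : K).
Hypothesis q_pchar : [pchar K].-nat q.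

Local Notation U := (unitalU q theta).

Lemma inFqD (r s : K) : inFq q r -> inFq q s -> inFq q (r + s).
Proof. by rewrite /inFq exprDn_pchar // => /eqP-> /eqP->. Qed.

Lemma inFqN (r : K) : inFq q r -> inFq q (- r).
Proof. by rewrite /inFq exprNn_pchar // => /eqP->. Qed.

Definition vshift (k : K) (pt : point K) : point K :=
  if pt is inl (x, y) then inl (x, y + k) else pt.

Lemma vshiftK k : cancel (vshift k) (vshift (- k)).
Proof. by case=> [[x y]|o] //=; rewrite addrK. Qed.

Lemma vshiftNK k : cancel (vshift (- k)) (vshift k).
Proof. by case=> [[x y]|o] //=; rewrite addrNK. Qed.

Lemma vshift_inj k : injective (vshift k).
Proof. exact: can_inj (vshiftK k). Qed.

Lemma mem_vshift_unitalU (r : K) pt :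
  inFq q r -> (vshift (r * theta) pt \in U) = (pt \in U).
Proof.
move=> Fq_r; case: pt => [[x y]|o] //; rewrite !inE.
apply/existsP/existsP => -[t /andP[Fq_t /eqP ty]].
- exists (t - r); rewrite inFqD ?inFqN //=.
  by rewrite mulrBl -ty addrK.
- by exists (t + r); rewrite inFqD //= ty mulrDl.
Qed.

Lemma mem_vshift_graph a b k pt :
  (vshift k pt \in line_pts f (inl (a, b - k))) = (pt \in line_pts f (inl (a, b))).
Proof.
case: pt => [[x y]|o]; rewrite !inE //=.
by rewrite opprB addrCA [_ + (_ - _)]addrC (inj_eq (addIr k)).
Qed.

Lemma mem_vshift_vertical d k pt :
  (vshift k pt \in line_pts f (inr (inl d))) = (pt \in line_pts f (inr (inl d))).
Proof. by case: pt => [[x y]|o]; rewrite !inE. Qed.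

Lemma block_through_infty {D} :
  is_block q f U D -> inr None \in D -> exists d, D = U :&: line_pts f (inr (inl d)).
Proof.
case/existsP => -[[a b]|[d|[]]] /andP[/eqP-> cardD]; rewrite !inE //=.
- by exists d.
- have : U :&: line_pts f (inr (inr tt)) \subset [set inr None].
    by apply/subsetP => -[[x y]|o]; rewrite !inE ?andbF ?andbT.
  move/subset_leq_card; rewrite cards1 (eqP cardD) ltnS leqn0.
  by have /andP[/lt0n_neq0/negbTE->] := q_pchar.
Qed.

Lemma block_off_infty {B} :
  is_block q f U B -> inr None \notin B ->
  exists a b, B = U :&: line_pts f (inl (a, b)).
Proof.
by case/existsP => -[[a b]|[d|[]]] /andP[/eqP-> _]; rewrite !inE //; exists a, b.
Qed.

Lemma mem_unital_vertical {c pt} :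
  pt \in U :&: line_pts f (inr (inl c)) -> pt != inr None ->
  exists2 t, inFq q t & pt = inl (c, t * theta).
Proof.
case: pt => [[x y]|o]; rewrite !inE /=; last by case/andP => /eqP->.
by case/andP => /existsP[t /andP[Fq_t /eqP->]] /eqP-> _; exists t.
Qed.

Lemma vshift_graph_block (r a b : K) : inFq q r ->
  vshift (r * theta) @: (U :&: line_pts f (inl (a, b)))
  = U :&: line_pts f (inl (a, b - r * theta)).
Proof.
move=> Fq_r; apply/setP => pt; rewrite -[pt](vshiftNK (r * theta)).
by rewrite mem_imset; [rewrite !in_setI mem_vshift_unitalU ?mem_vshift_graph | exact: vshift_inj].
Qed.

Lemma is_block_vshift (r : K) B : inFq q r ->
  is_block q f U B -> inr None \notin B -> is_block q f U (vshift (r * theta) @: B).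
Proof.
move=> Fq_r blockB nvB; have [a [b eB]] := block_off_infty blockB nvB.
case/existsP: blockB => l /andP[/eqP eBl cardB].
apply/existsP; exists (inl (a, b - r * theta)).
rewrite eB vshift_graph_block // eqxx -vshift_graph_block // card_imset; last exact: vshift_inj.
by rewrite -eB eBl.
Qed.

Lemma unitalU_strong_WII_vertex_infty : strong_WII_vertex q f U (inr None).
Proof.
split; first by rewrite inE.
move=> B C blockB nvB blockC vC /set0Pn[z /setIP[zB zC]] w wC nvw _.
have [c eC] := block_through_infty blockC vC.
have [u Fq_u ez] : exists2 u, inFq q u & z = inl (c, u * theta).
  by apply: mem_unital_vertical; rewrite -?eC //; apply: contraNneq nvB => <-.
have [s Fq_s ew] : exists2 s, inFq q s & w = inl (c, s * theta).
  by apply: mem_unital_vertical; rewrite -?eC.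
have Fq_su : inFq q (s - u) by rewrite inFqD ?inFqN.
pose shift := vshift ((s - u) * theta).
exists (shift @: B); split.
- exact: is_block_vshift.
- apply: contraNneq nvB => eBC; move: vC; rewrite -eBC.
  by rewrite -[inr None]/(shift (inr None)) mem_imset //; exact: vshift_inj.
- have -> : w = shift z by rewrite ew ez /= -mulrDl subrKC.
  exact: imset_f.
move=> D blockD vD /set0Pn[z' /setIP[z'D z'B]].
have [d eD] := block_through_infty blockD vD.
apply/set0Pn; exists (shift z'); rewrite inE imset_f //=.
by rewrite eD in_setI mem_vshift_unitalU // mem_vshift_vertical -in_setI -eD.
Qed.

End VerticalTranslation.

Theorem proposition3p8 (K : finFieldType) (p n : nat) (f : K -> K) (xi theta : K) :
  prime p -> odd p -> (0 < n)%N ->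
  #|K| = ((p ^ n) ^ 2)%N ->
  xi ^+ (p ^ n) != xi ->
  normal_planar f ->
  theta != 0 ->
  (forall c : K, inFq (p ^ n) c ->
     #|[set x : K | comp1 (p ^ n) xi theta * comp0 (p ^ n) xi (f x)
                    - comp0 (p ^ n) xi theta * comp1 (p ^ n) xi (f x) == c]|
     = (if c == 0 then 1%N else (p ^ n).+1)) ->
  strong_WII_vertex (p ^ n) f (unitalU (p ^ n) theta) (inr None).
Proof.
move=> p_prime _ _ cardK _ _ _ _.
apply: unitalU_strong_WII_vertex_infty.
have pcharKp : p \in [pchar K] by apply: card_finPcharP p_prime; rewrite cardK -expnM.
by rewrite pnatX (eq_pnat _ (pcharf_eq pcharKp)) pnat_id.
Qed.
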